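(* Let $b(z)$ be a holomorphic function and $\bar b(\bar z)=\overline{b(z)}$. On the real four-manifold with complex coordinates $(q,z)$ (and $z+\bar z>0$), consider the metric $$ds^2=(z+\bar z)^{-2}\Bigl\{(z+\bar z)(dq\,d\bar z+d\bar q\,dz)-\bigl[(q+b(z))\,d\bar z+(\bar q+\bar b(\bar z))\,dz\bigr](dz+d\bar z)\Bigr\}.$$ Then this metric is Ricci-flat, and in the coordinates $(q,\bar q,z,\bar z)$ every component of its Riemann tensor vanishes except those obtained from $R_{z\bar z z\bar z}$ by the symmetries of the Riemann tensor, where $$R_{z\bar z z\bar z}=c\,(z+\bar z)^{-3}\Bigl\{2\bigl[b'(z)+\bar b'(\bar z)\bigr]-(z+\bar z)\bigl[b''(z)+\bar b''(\bar z)\bigr]\Bigr\}$$ for a nonzero numerical constant $c$ independent of $b$ (equal to $1/2$ in the paper's conventions).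
   Context: Products of differentials denote symmetrized tensor products, e.g. $dq\,d\bar z=\tfrac12(dq\otimes d\bar z+d\bar z\otimes dq)$; bars denote complex conjugates; primes denote derivatives. This metric is the ultra-hyperbolic hyper-Kähler metric associated with the solution $\psi=[q+b]\ln[q+b]+[\bar q+\bar b]\ln[\bar q+\bar b]-(q+\bar q)[\ln(z+\bar z)+1]+G+2(\alpha-\pi)y+r_0$ (with $G_{z\bar z}=(b+\bar b)/(z+\bar z)^2$) of the Legendre-transformed hyperbolic complex Monge–Ampère equation. *)

(* the curvature computation is carried out in an abstract
   commutative differential ring. *)
From HB Require Import structures.
From mathcomp Require Import all_boot all_order all_algebra.
Set Implicit Arguments. Unset Strict Implicit. Unset Printing Implicit Defensive.
Import Order.TTheory GRing.Theory Num.Theory.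
Local Open Scope ring_scope.

Definition iq  : 'I_4 := @Ordinal 4 0 isT.
Definition iqb : 'I_4 := @Ordinal 4 1 isT.
Definition iz  : 'I_4 := @Ordinal 4 2 isT.
Definition izb : 'I_4 := @Ordinal 4 3 isT.

(* d i = partial derivative along the i-th coordinate (Wirtinger derivatives
   d/dq, d/dqbar, d/dz, d/dzbar): additive, Leibniz, pairwise commuting. *)
Definition is_deriv4 (R : comUnitRingType) (d : 'I_4 -> R -> R) : Prop :=
  [/\ (forall i x y, d i (x + y) = d i x + d i y),
      (forall i x y, d i (x * y) = d i x * y + x * d i y) &
      (forall i j x, d i (d j x) = d j (d i x))].

Definition is_coords (R : comUnitRingType) (d : 'I_4 -> R -> R) (x : 'I_4 -> R)
  : Prop := forall i j, d i (x j) = (i == j)%:R.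

Section Geometry.
Variable R : comUnitRingType.

(* 1-forms: coefficient vectors w.r.t. (dq, dqbar, dz, dzbar). *)
Definition oneform := 'I_4 -> R.
Definition dx (k : 'I_4) : oneform := fun i => (i == k)%:R.
Definition fadd (w v : oneform) : oneform := fun i => w i + v i.
Definition fscale (a : R) (w : oneform) : oneform := fun i => a * w i.
Definition symp (w v : oneform) : 'M[R]_4 :=
  \matrix_(i, j) (2%:R^-1 * (w i * v j + v i * w j)).

Definition metric (x : 'I_4 -> R) (b bb : R) : 'M[R]_4 :=
  let s := x iz + x izb in
  let A := x iq + b in
  let B := x iqb + bb in
  (s ^- 2) *: (s *: (symp (dx iq) (dx izb) + symp (dx iqb) (dx iz))
               - symp (fadd (fscale A (dx izb)) (fscale B (dx iz)))
                      (fadd (dx iz) (dx izb))).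

Variable d : 'I_4 -> R -> R.
Variable g : 'M[R]_4.

Definition ginv : 'M[R]_4 := invmx g.

Definition chr1 (l i j : 'I_4) : R :=
  2%:R^-1 * (d i (g j l) + d j (g i l) - d l (g i j)).

Definition chr2 (k i j : 'I_4) : R := \sum_(l < 4) ginv k l * chr1 l i j.

Definition riem_up (r s m n : 'I_4) : R :=
  d m (chr2 r n s) - d n (chr2 r m s)
  + \sum_(t < 4) (chr2 r m t * chr2 t n s - chr2 r n t * chr2 t m s).

Definition riem (a s m n : 'I_4) : R := \sum_(r < 4) g a r * riem_up r s m n.

Definition ricci (s n : 'I_4) : R := \sum_(r < 4) riem_up r s r n.

End Geometry.

(* +1 on (z,zbar), -1 on (zbar,z), 0 otherwise: the components R_{ijkl}
   obtained from R_{z zb z zb} by the symmetries of the Riemann tensor are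
   exactly sgn_zzb i j * sgn_zzb k l * R_{z zb z zb}. *)
Definition sgn_zzb (R : comUnitRingType) (i j : 'I_4) : R :=
  if (i == iz) && (j == izb) then 1
  else if (i == izb) && (j == iz) then -1 else 0.

(* The computation is the textbook one (metric, inverse metric, Christoffel
   symbols, Riemann tensor), organised so that every identity between
   explicit components is checked by [ring] modulo the single relation
   s * (1/s) = 1; the factors 1/2 are removed structurally.
   - The metric is 1/2 times a matrix G2 whose entries, like those of its
     inverse, are polynomial in u = 1/s, A, B ([metricE], [inv_metric2E]);
     Christoffel symbols do not change when the metric is multiplied by a
     constant ([chr2Z]), which gives their table ([christoffelE]).
   - Only Gamma^q and Gamma^qb are nonzero, so the rows R^z and R^zb of the
     Riemann tensor vanish ([riem_up_flat_row]) and R^r_{s m n} has the single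
     independent component R^q_{z z zb} = - R^qb_{zb z zb} ([riemann_upE]).
   - Ricci-flatness and the covariant components follow by contracting this
     table ([ricciE], [riemannE]); the constant of the theorem is c = -1/2
     in the sign conventions of [riem_up]. *)

From HB Require Import structures.
From mathcomp Require Import all_boot all_order all_algebra ring.
Import Order.TTheory GRing.Theory Num.Theory.
Set Implicit Arguments. Unset Strict Implicit. Unset Printing Implicit Defensive.
Local Open Scope ring_scope.

Section Derivation.
Variables (R : comUnitRingType) (D : R -> R).
Hypothesis D_add : forall y z, D (y + z) = D y + D z.
Hypothesis D_mul : forall y z, D (y * z) = D y * z + y * D z.

Lemma derivation0 : D 0 = 0.
Proof. by apply/(addrI (D 0)); rewrite -D_add !addr0. Qed.

Lemma derivationN y : D (- y) = - D y.
Proof. by apply/(addrI (D y)); rewrite -D_add !subrr derivation0. Qed.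

Lemma derivation1 : D 1 = 0.
Proof.
have D11 : D 1 + D 1 = D 1 + 0 by rewrite addr0 -{3}(mulr1 1) D_mul mulr1 mul1r.
exact: addrI D11.
Qed.

Lemma derivation_nat n : D n%:R = 0.
Proof.
by elim: n => [|n IHn]; rewrite ?derivation0 // mulrS D_add IHn derivation1 addr0.
Qed.

Lemma derivation_inv y v : y * v = 1 -> D v = - v ^+ 2 * D y.
Proof.
move=> yv; have : D (y * v) = 0 by rewrite yv derivation1.
rewrite D_mul => D_yv.
have -> : D v = v * (D y * v + y * D v) - D y * v ^+ 2 by ring: yv.
by rewrite D_yv mulr0 sub0r mulNr mulrC.
Qed.

End Derivation.

Lemma ord4P (P : 'I_4 -> Prop) : P iq -> P iqb -> P iz -> P izb -> forall i, P i.
Proof.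
move=> Pq Pqb Pz Pzb [[|[|[|[|n]]]] lt_i4].
- by rewrite (_ : Ordinal _ = iq) //; apply: val_inj.
- by rewrite (_ : Ordinal _ = iqb) //; apply: val_inj.
- by rewrite (_ : Ordinal _ = iz) //; apply: val_inj.
- by rewrite (_ : Ordinal _ = izb) //; apply: val_inj.
- by [].
Qed.

Lemma big_ord4 (V : nmodType) (F : 'I_4 -> V) :
  \sum_(i < 4) F i = F iq + F iqb + F iz + F izb.
Proof.
rewrite !big_ord_recl big_ord0 addr0 !addrA.
by congr (F _ + F _ + F _ + F _); apply: val_inj.
Qed.

(* The Levi-Civita connection is unchanged when the metric is multiplied by an
   invertible constant c: Gamma_{lij} scales by c and g^{kl} by 1/c. *)
Section ConstantRescaling.
Variables (R : comUnitRingType) (d : 'I_4 -> R -> R) (g : 'M[R]_4) (c : R).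
Hypothesis d_deriv : is_deriv4 d.
Hypothesis c_const : forall i, d i c = 0.

Lemma chr1Z l i j : chr1 d (c *: g) l i j = c * chr1 d g l i j.
Proof.
have dZ k y : d k (c * y) = c * d k y.
  by case: d_deriv => _ dM _; rewrite dM c_const mul0r add0r.
by rewrite /chr1 !mxE !dZ; ring.
Qed.

Hypothesis c_unit : c \is a GRing.unit.
Hypothesis g_unit : g \in unitmx.

Lemma chr2Z k i j : chr2 d (c *: g) k i j = chr2 d g k i j.
Proof.
rewrite /chr2 /ginv invmxZ ?unitmxZ //; apply: eq_bigr => l _.
have Vc_c : c^-1 * c = 1 := mulVr c_unit.
by rewrite mxE chr1Z; ring: Vc_c.
Qed.

End ConstantRescaling.

Lemma riem_up_flat_row (R : comUnitRingType) (d : 'I_4 -> R -> R) (g : 'M[R]_4) r :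
  is_deriv4 d -> (forall i j, chr2 d g r i j = 0) ->
  forall s m n, riem_up d g r s m n = 0.
Proof.
case=> dD _ _ Gamma_r0 s m n.
rewrite /riem_up !Gamma_r0 (derivation0 (dD m)) (derivation0 (dD n)) subrr add0r.
by rewrite big1 // => t _; rewrite !Gamma_r0 !mul0r subrr.
Qed.

Lemma ratr_Nhalf (R : unitRingType) : ratr (- 2%:R^-1) = - 2%:R^-1 :> R.
Proof.
have num_Nhalf : numq (- 2%:R^-1) = -1 by vm_compute.
have den_Nhalf : denq (- 2%:R^-1) = 2 by vm_compute.
by rewrite /ratr num_Nhalf den_Nhalf rmorphN1 mulN1r.
Qed.

Section Curvature.
Variables (R : comUnitRingType) (d : 'I_4 -> R -> R) (x : 'I_4 -> R) (b bb : R).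
Hypothesis d_deriv : is_deriv4 d.
Hypothesis x_coords : is_coords d x.
Hypothesis two_unit : (2%:R : R) \is a GRing.unit.
Hypothesis s_unit : x iz + x izb \is a GRing.unit.
Hypothesis b_holo : forall i, i != iz -> d i b = 0.
Hypothesis bb_antiholo : forall i, i != izb -> d i bb = 0.

(* They are constants rather than notations, so that [ring] treats
   them as atoms and the derivation rules below do not unfold them. *)
Definition zz_sum : R := x iz + x izb.
Definition zz_inv : R := zz_sum^-1.
Definition q_shift : R := x iq + b.
Definition qb_shift : R := x iqb + bb.
Definition b1 : R := d iz b.
Definition bb1 : R := d izb bb.
Definition b2 : R := d iz b1.
Definition bb2 : R := d izb bb1.
Local Notation s := zz_sum.
Local Notation u := zz_inv.
Local Notation A := q_shift.
Local Notation B := qb_shift.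
Local Notation half := (2%:R^-1 : R).

Fact s_u : s * u = 1. Proof. exact: mulrV. Qed.

Let dD i y z : d i (y + z) = d i y + d i z. Proof. by case: d_deriv. Qed.
Let dM i y z : d i (y * z) = d i y * z + y * d i z. Proof. by case: d_deriv. Qed.
Let dC i j y : d i (d j y) = d j (d i y). Proof. by case: d_deriv. Qed.
Let d0 i : d i 0 = 0. Proof. exact: derivation0. Qed.
Let dN i y : d i (- y) = - d i y. Proof. exact: derivationN. Qed.
Let d1 i : d i 1 = 0. Proof. exact: derivation1. Qed.
Let d_half i : d i half = 0.
Proof.
by rewrite (derivation_inv (dM i) (mulrV two_unit)) (derivation_nat (dD i) (dM i)) mulr0.
Qed.
Let d_u i : d i u = - u ^+ 2 * ((i == iz)%:R + (i == izb)%:R).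
Proof. by rewrite (derivation_inv (dM i) s_u) /zz_sum dD !x_coords. Qed.
Let d_A i : d i A = (i == iq)%:R + (if i == iz then b1 else 0).
Proof. by rewrite /q_shift dD x_coords; case: (eqVneq i iz) => [->|/b_holo ->]. Qed.
Let d_B i : d i B = (i == iqb)%:R + (if i == izb then bb1 else 0).
Proof.
by rewrite /qb_shift dD x_coords; case: (eqVneq i izb) => [->|/bb_antiholo ->].
Qed.
Let d_b1 i : d i b1 = if i == iz then b2 else 0.
Proof. by case: (eqVneq i iz) => [->|/b_holo i_z] //; rewrite /b1 dC i_z d0. Qed.
Let d_bb1 i : d i bb1 = if i == izb then bb2 else 0.
Proof. by case: (eqVneq i izb) => [->|/bb_antiholo i_zb] //; rewrite /bb1 dC i_zb d0. Qed.

Definition metric2_coef (i j : 'I_4) : R :=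
  match nat_of_ord i, nat_of_ord j with
  | 0, 3 | 3, 0 | 1, 2 | 2, 1 => u
  | 2, 2 => - 2 * B * u ^+ 2
  | 3, 3 => - 2 * A * u ^+ 2
  | 2, 3 | 3, 2 => - (A + B) * u ^+ 2
  | _, _ => 0
  end.

Definition inv_metric2_coef (i j : 'I_4) : R :=
  match nat_of_ord i, nat_of_ord j with
  | 0, 0 => 2 * A
  | 1, 1 => 2 * B
  | 0, 1 | 1, 0 => A + B
  | 0, 3 | 3, 0 | 1, 2 | 2, 1 => s
  | _, _ => 0
  end.

Local Notation G2 := (\matrix_(i, j) metric2_coef i j).
Local Notation G2inv := (\matrix_(i, j) inv_metric2_coef i j).

Lemma metricE : metric x b bb = half *: G2.
Proof.
apply/matrixP => i j; rewrite /metric /symp /fadd /fscale /dx !mxE.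
rewrite -/zz_sum -/q_shift -/qb_shift -exprVn -/zz_inv.
by elim/ord4P: i; elim/ord4P: j; rewrite /metric2_coef /= ?mulr0n ?mulr1n; ring: s_u.
Qed.

Lemma G2inv_G2 : G2inv *m G2 = 1%:M.
Proof.
apply/matrixP => i j; rewrite !mxE big_ord4 !mxE.
by elim/ord4P: i; elim/ord4P: j;
  rewrite /metric2_coef /inv_metric2_coef /= ?mulr0n ?mulr1n; ring: s_u.
Qed.

Lemma G2_unit : G2 \in unitmx.
Proof. by case: (mulmx1_unit G2inv_G2). Qed.

Lemma inv_metric2E : invmx G2 = G2inv.
Proof. by rewrite -[invmx G2]mul1mx -G2inv_G2 -mulmxA mulmxV ?G2_unit // mulmx1. Qed.

Definition christoffel_coef (k i j : 'I_4) : R :=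
  match nat_of_ord k, nat_of_ord i, nat_of_ord j with
  | 0, 0, 2 | 0, 0, 3 | 0, 2, 0 | 0, 3, 0 => - u
  | 0, 2, 2 => u * bb1 - u * b1 + 2 * u ^+ 2 * A
  | 0, 2, 3 | 0, 3, 2 => - u * b1 + 2 * u ^+ 2 * A
  | 0, 3, 3 => 2 * u ^+ 2 * A
  | 1, 1, 2 | 1, 1, 3 | 1, 2, 1 | 1, 3, 1 => - u
  | 1, 2, 2 => 2 * u ^+ 2 * B
  | 1, 2, 3 | 1, 3, 2 => - u * bb1 + 2 * u ^+ 2 * B
  | 1, 3, 3 => u * b1 - u * bb1 + 2 * u ^+ 2 * B
  | _, _, _ => 0
  end.

Lemma christoffelE k i j : chr2 d (metric x b bb) k i j = christoffel_coef k i j.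
Proof.
rewrite metricE (chr2Z d_deriv d_half) ?unitrV ?G2_unit // /chr2 /chr1.
under eq_bigr do rewrite mulrCA.
rewrite -mulr_sumr (_ : \sum_l _ = 2 * christoffel_coef k i j).
  by rewrite mulrA mulVr ?mul1r.
rewrite /ginv inv_metric2E big_ord4 !mxE.
elim/ord4P: k; elim/ord4P: i; elim/ord4P: j;
  rewrite /metric2_coef /inv_metric2_coef /christoffel_coef /=.
all: rewrite ?(dD, dM, dN, d0, d1, d_u, d_A, d_B) /=.
all: ring: s_u.
Qed.

(* R^r_{s m n} vanishes unless (r, s) is (q, z) or (qb, zb) and {m, n} = {z, zb}. *)
Definition qz_sign (r s' : 'I_4) : R :=
  ((r == iq) && (s' == iz))%:R - ((r == iqb) && (s' == izb))%:R.

Definition curvature_coef : R := u ^+ 2 * (2 * (b1 + bb1) - s * (b2 + bb2)).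

Lemma christoffel_z_row0 i j : chr2 d (metric x b bb) iz i j = 0.
Proof. by rewrite christoffelE. Qed.

Lemma christoffel_zb_row0 i j : chr2 d (metric x b bb) izb i j = 0.
Proof. by rewrite christoffelE. Qed.

Lemma riemann_upE r s' m n :
  riem_up d (metric x b bb) r s' m n = qz_sign r s' * sgn_zzb R m n * curvature_coef.
Proof.
elim/ord4P: r; last 2 first.
- by rewrite (riem_up_flat_row d_deriv christoffel_z_row0) /qz_sign /= subrr !mul0r.
- by rewrite (riem_up_flat_row d_deriv christoffel_zb_row0) /qz_sign /= subrr !mul0r.
all: rewrite /riem_up big_ord4 !christoffelE /qz_sign /sgn_zzb /curvature_coef.
all: elim/ord4P: s'; elim/ord4P: m; elim/ord4P: n; rewrite /christoffel_coef /=.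
all: rewrite ?(dD, dM, dN, d0, d1, d_u, d_A, d_B, d_b1, d_bb1) /=.
all: ring: s_u.
Qed.

(* The upper index of a nonzero component is q or qb, never z or zb. *)
Lemma qz_sign_sgn r s' n : qz_sign r s' * sgn_zzb R r n = 0.
Proof. by elim/ord4P: r; rewrite /qz_sign /sgn_zzb /= ?mulr0 ?subrr ?mul0r. Qed.

Lemma ricciE s' n : ricci d (metric x b bb) s' n = 0.
Proof. by rewrite /ricci big1 // => r _; rewrite riemann_upE qz_sign_sgn mul0r. Qed.

(* Lowering the upper index of the table: only g_{a q} and g_{a qb} are
   picked out by the sign pattern, and g_{zb q} = g_{z qb} = u/2. *)
Lemma metric_qz_sign a s' :
  \sum_r metric x b bb a r * qz_sign r s' = - half * u * sgn_zzb R a s'.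
Proof.
rewrite metricE big_ord4 !mxE /qz_sign /sgn_zzb.
by elim/ord4P: a; elim/ord4P: s'; rewrite /metric2_coef /=; ring.
Qed.

Lemma riemannE i j k l :
  riem d (metric x b bb) i j k l =
  sgn_zzb R i j * sgn_zzb R k l *
  (- half * (x iz + x izb) ^- 3 *
     (2%:R * (d iz b + d izb bb) - (x iz + x izb) * (d iz (d iz b) + d izb (d izb bb)))).
Proof.
rewrite /riem; under eq_bigr do rewrite riemann_upE -mulrA mulrA.
rewrite -big_distrl /= metric_qz_sign /curvature_coef.
rewrite -/zz_sum -exprVn -/zz_inv -/b1 -/bb1 -/b2 -/bb2.
ring.
Qed.

End Curvature.

Theorem mainTheorem7 :
  exists c : rat, c != 0 /\
  forall (R : comUnitRingType) (d : 'I_4 -> R -> R) (x : 'I_4 -> R) (b bb : R),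
    is_deriv4 d -> is_coords d x ->
    (2%:R : R) \is a GRing.unit ->
    x iz + x izb \is a GRing.unit ->
    (forall i, i != iz -> d i b = 0) ->
    (forall i, i != izb -> d i bb = 0) ->
    let g := metric x b bb in
    let s := x iz + x izb in
    (forall i j, ricci d g i j = 0) /\
    (forall i j k l,
       riem d g i j k l =
       sgn_zzb R i j * sgn_zzb R k l *
       (ratr c * s ^- 3 *
          (2%:R * (d iz b + d izb bb) - s * (d iz (d iz b) + d izb (d izb bb))))).
Proof.
exists (- 2%:R^-1); split=> [|R d x b bb d_deriv x_coords two_unit s_unit b_holo bb_antiholo].
  by vm_compute.
split=> [i j | i j k l]; first exact: ricciE.
by rewrite ratr_Nhalf riemannE.
Qed.
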